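(* Consider the uniform Qs predictor with queue capacity $a:=\mathrm{qcap}$, an integer $a\ge2$, processing an arbitrary sequence of items. For items $i$ whose queue has exactly $a$ cells, the estimate is $Q(i)=(a-1)/Y_i$ with $Y_i:=\sum_{0\le j<|q(i)|}c_j-1$, and $Q(i)=0$ for all other items. Then at every time $t\ge1$ and for every integer $k>1$, $N(Q^{(t)},1/k)\le k-1$, where $N(Q,p):=|\{i:Q(i)>p\}|$.
   Context: The Qs predictor keeps a map from items to queues of positive integer counts (''cells''), the newest cell being $c_0$, older ones $c_1,c_2,\dots$; each queue holds at most $\mathrm{qcap}$ cells. At each time $t$ it outputs estimates $Q^{(t)}$, then observes $o^{(t)}$ and updates: if $o^{(t)}$ has no queue, an empty queue is created; the queue of $o^{(t)}$ gets a positive update (its size grows by one if below capacity; all existing cells shift one position older, the oldest being discarded if at capacity; a new cell $c_0=1$ is created), and every other existing queue gets a negative update ($c_0$ incremented by $1$). Items may occasionally be removed from the map (pruning). The ''uniform'' variant outputs a positive estimate for an item only once its queue has reached capacity $\mathrm{qcap}$. *)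

From mathcomp Require Import all_boot all_algebra finmap.
Set Implicit Arguments. Unset Strict Implicit. Unset Printing Implicit Defensive.
Import GRing.Theory Num.Theory.

Local Open Scope fset_scope.
Local Open Scope fmap_scope.

(** A queue is a list of positive counts, newest cell c_0 first. *)
Definition queue := seq nat.

Definition qs_state (T : choiceType) := {fmap T -> queue}.

(** Positive update with capacity [qcap]: all cells shift one older (the
    oldest discarded if the queue is at capacity) and a new cell c_0 = 1
    is created. *)
Definition pos_update (qcap : nat) (q : queue) : queue := take qcap (1 :: q).

Definition neg_update (q : queue) : queue :=
  if q is c :: r then c.+1 :: r else [::].

Definition observe (T : choiceType) (qcap : nat) (m : qs_state T) (o : T)
  : qs_state T :=
  [fmap x : domf m => neg_update (m x)].[o <- pos_update qcap (odflt [::] m.[? o])].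

Inductive event (T : Type) := Obs of T | Prune of T.

Definition step (T : choiceType) (qcap : nat) (m : qs_state T) (e : event T)
  : qs_state T :=
  match e with
  | Obs o => observe qcap m o
  | Prune i => m.[~ i]
  end.

Definition run (T : choiceType) (qcap : nat) (evs : seq (event T)) : qs_state T :=
  foldl (step qcap) [fmap] evs.

Definition Qest (T : choiceType) (qcap : nat) (m : qs_state T) (i : T) : rat :=
  match m.[? i] with
  | Some q => if size q == qcap
              then ((qcap%:R - 1) / ((sumn q)%:R - 1))%R
              else 0%R
  | None => 0%R
  end.

(** N(Q,p) = #{ i : Q(i) > p }.  Items outside the map have estimate 0, so
    for p >= 0 it suffices to count over the domain of the map. *)
Definition Ncount (T : choiceType) (qcap : nat) (m : qs_state T) (p : rat) : nat :=
  #|` [fset i in domf m | (p < Qest qcap m i)%R] |.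

From mathcomp Require Import all_boot all_algebra finmap.
From mathcomp Require Import zify.
Import order.Order.TTheory GRing.Theory Num.Theory.

Set Implicit Arguments.
Unset Strict Implicit.
Unset Printing Implicit Defensive.

(* The prefix sums c_0, c_0 + c_1, ... of the queue of an item are the ages of
   its recent observations.  At each step one item is observed (age 1) and all
   ages grow by one, so the ages of distinct items are distinct positive
   integers.  If Q(i) > 1/k, the a ages of i are at most Y_i + 1 <= k (a - 1);
   disjointness then leaves room for fewer than k such items. *)

Local Open Scope fmap_scope.

Lemma fnd_map_fmap (T : choiceType) (V : Type) (f : V -> V) (m : {fmap T -> V}) i :
  [fmap x : domf m => f (m x)].[? i] = omap f m.[? i].
Proof. by case: fndP => [im|imN] /=; [rewrite ffunE in_fnd | rewrite not_fnd]. Qed.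

Lemma scanl_take (T S : Type) (g : T -> S -> T) x n s :
  scanl g x (take n s) = take n (scanl g x s).
Proof. by elim: s n x => [|y s IH] [|n] x //=; rewrite IH. Qed.

Lemma scanl_addnS s q : scanl addn s.+1 q = map succn (scanl addn s q).
Proof. by elim: q s => [|c q IH] s //=; rewrite addSn IH. Qed.

Lemma mem_scanl_addn_le s q x : x \in scanl addn s q -> x <= s + sumn q.
Proof.
elim: q s => [|c q IH] s //=; rewrite inE addnA => /predU1P [-> | /IH //].
exact: leq_addr.
Qed.

Definition ages (T : choiceType) (m : qs_state T) (i : T) : seq nat :=
  scanl addn 0 (odflt [::] m.[? i]).

Lemma ages_observe (T : choiceType) a (m : qs_state T) o i :
  ages (observe a m o) i =
  if i == o then take a (1 :: map succn (ages m o)) else map succn (ages m i).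
Proof.
rewrite /ages /observe fnd_set; case: eqP => _ /=.
  by rewrite /pos_update scanl_take /= scanl_addnS.
by rewrite fnd_map_fmap; case: m.[? i] => [[|c q]|] //=; rewrite scanl_addnS.
Qed.

Lemma ages_prune (T : choiceType) (m : qs_state T) p i :
  ages m.[~ p] i = if i == p then [::] else ages m i.
Proof. by rewrite /ages fnd_rem1; case: eqP. Qed.

Definition ages_wf (T : choiceType) (m : qs_state T) :=
  [/\ forall i, 0 \notin ages m i,
      forall i, uniq (ages m i) &
      forall i j x, x \in ages m i -> x \in ages m j -> i = j].

Lemma mem_ages_observe (T : choiceType) a (m : qs_state T) o i x :
  x \in ages (observe a m o) i ->
  (i == o) && (x == 1) || (0 < x) && (x.-1 \in ages m i).
Proof.
rewrite ages_observe; case: eqP => [->|_] //=.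
  by move=> /mem_take; rewrite inE => /predU1P [->|/mapP [y y_o ->]];
    rewrite //= y_o orbT.
by move=> /mapP [y ? ->].
Qed.

Lemma ages_wf_observe (T : choiceType) a (m : qs_state T) o :
  ages_wf m -> ages_wf (observe a m o).
Proof.
case=> ages_pos ages_uniq ages_disj; split.
- by move=> i; apply/negP => /mem_ages_observe /orP [/andP [_ /eqP] | /andP []].
- move=> i; rewrite ages_observe; case: eqP => _; last by rewrite (map_inj_uniq succn_inj).
  apply: take_uniq; rewrite /= (map_inj_uniq succn_inj).
  rewrite ages_uniq andbT; apply/mapP => -[y y_o [y0]].
  by move: y_o; rewrite -y0 (negPf (ages_pos o)).
- move=> i j x /mem_ages_observe /orP [/andP [/eqP -> /eqP ->]|/andP [_ x_i]];
    move=> /mem_ages_observe /orP [/andP [/eqP -> /eqP x1]|/andP [_ x_j]] //.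
  + by move: x_j; rewrite (negPf (ages_pos j)).
  + by move: x_i; rewrite x1 (negPf (ages_pos i)).
  + exact: ages_disj x_i x_j.
Qed.

Lemma ages_wf_prune (T : choiceType) (m : qs_state T) p :
  ages_wf m -> ages_wf m.[~ p].
Proof.
case=> ages_pos ages_uniq ages_disj; split => [i|i|i j x]; rewrite ?ages_prune.
- by case: eqP.
- by case: eqP.
- by case: eqP => // _; case: eqP => // _; apply: ages_disj.
Qed.

Lemma ages_wf_run (T : choiceType) a (evs : seq (event T)) : ages_wf (run a evs).
Proof.
rewrite /run; have : ages_wf ([fmap] : qs_state T).
  by split=> [i|i|i j x]; rewrite /ages fnd_fmap0.
elim: evs [fmap] => [|[o|p] evs IH] m wf_m //=; apply: IH.
- exact: ages_wf_observe.
- exact: ages_wf_prune.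
Qed.

Lemma invn_lt_ratio_leq (a k S : nat) : 0 < a -> 0 < k ->
  (1 / k%:R < (a%:R - 1) / (S%:R - 1) :> rat)%R -> S <= k * (a - 1).
Proof.
move=> a_gt0 k_gt0; have inv_k_ge0 : (0 <= 1 / k%:R :> rat)%R by rewrite divr_ge0.
case: S => [|[|S]].
- rewrite sub0r invrN1 mulrN1 ltNge => /negP []; apply: le_trans inv_k_ge0.
  by rewrite oppr_le0 subr_ge0 ler1n.
- by rewrite subrr invr0 mulr0 ltNge inv_k_ge0.
- rewrite -[S.+2]addn1 natrD addrK -(natrB _ a_gt0).
  rewrite ltr_pdivlMr ?ltr0Sn // mul1r mulrC ltr_pdivrMr ?ltr0n //.
  by rewrite -natrM ltr_nat mulnC addn1.
Qed.

Lemma ages_of_Qest_gt (T : choiceType) a k (m : qs_state T) i :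
  ages_wf m -> 0 < a -> 0 < k -> (1 / k%:R < Qest a m i)%R ->
  size (ages m i) = a /\ {subset ages m i <= iota 1 (k * (a - 1))}.
Proof.
case=> ages_pos _ _ a_gt0 k_gt0; rewrite /Qest.
have inv_k_nlt0 : ~ (1 / k%:R < 0 :> rat)%R by rewrite ltNge divr_ge0.
have := ages_pos i; rewrite /ages.
case: m.[? i] => [q|//] /= q_pos; case: eqP => [q_a|//] /invn_lt_ratio_leq.
move=> /(_ a_gt0 k_gt0) q_le; rewrite size_scanl; split=> // x x_q.
rewrite mem_iota add1n ltnS lt0n (memPn q_pos) //=.
exact: leq_trans (mem_scanl_addn_le x_q) q_le.
Qed.

Lemma disjoint_family_size_leq (I : eqType) (E : eqType) (s : seq I)
    (f : I -> seq E) (u : seq E) a :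
  uniq s -> (forall i j x, x \in f i -> x \in f j -> i = j) ->
  (forall i, uniq (f i)) ->
  {in s, forall i, size (f i) = a /\ {subset f i <= u}} ->
  size s * a <= size u.
Proof.
move=> s_uniq f_disj f_uniq f_in_u.
have flat_uniq : uniq (flatten (map f s)).
  elim: s s_uniq {f_in_u} => [|i s IH] //= /andP [i_s s_uniq].
  rewrite cat_uniq f_uniq IH // andbT.
  apply/hasP => -[x /flattenP [l /mapP [j j_s ->] x_j] x_i].
  by move: i_s; rewrite (f_disj _ _ _ x_i x_j) j_s.
have -> : size s * a = size (flatten (map f s)).
  elim: s {s_uniq flat_uniq} f_in_u => [|i s IH] f_in_u //=.
  rewrite size_cat mulSn -IH => [|j j_s]; last by apply: f_in_u; rewrite inE j_s orbT.
  by have [-> _] := f_in_u i (mem_head _ _).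
apply: uniq_leq_size flat_uniq _ => x /flattenP [l /mapP [i i_s ->]].
by have [_] := f_in_u i i_s; apply.
Qed.

Theorem lemma14 (T : choiceType) (a : nat) (evs : seq (event T)) (k : nat) :
  (2 <= a)%N -> (1 < k)%N ->
  (Ncount a (run a evs) (1 / k%:R)%R%R <= k - 1)%N.
Proof.
move=> a_ge2 k_gt1; set m := run a evs.
have wf_m := ages_wf_run a evs; have [_ ages_uniq ages_disj] := wf_m.
set F := [fset i in domf m | (1 / k%:R < Qest a m i)%R]%fset.
have F_ages : {in enum_fset F, forall i,
    size (ages m i) = a /\ {subset ages m i <= iota 1 (k * (a - 1))}}.
  move=> i; rewrite !inE => /andP [_ Q_gt].
  exact: ages_of_Qest_gt wf_m (ltnW a_ge2) (ltnW k_gt1) Q_gt.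
have := disjoint_family_size_leq (fset_uniq F) ages_disj ages_uniq F_ages.
rewrite size_iota /Ncount -/F => F_le; suff : #|` F| < k by lia.
rewrite -(ltn_pmul2r (ltnW a_ge2)); apply: leq_ltn_trans F_le _.
by rewrite ltn_pmul2l ?subn1 ?ltn_predL // ltnW.
Qed.
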